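(* Let $T$ be a triangulation of the oriented 2-sphere (a simplicial complex), $z:\mathcal V(T)\to\mathbb C$ injective with no degenerate face. For every vertex $v$ and edge $e$, $$\frac{\partial\theta_e}{\partial z_v}=\frac{\mathrm i}2\sum_{e'\in\mathcal E(T)}A_{v,e'}E_{e',e},\qquad \frac{\partial\theta_e}{\partial\bar z_v}=-\frac{\mathrm i}2\sum_{e'\in\mathcal E(T)}\bar A_{v,e'}E_{e',e}.$$
   Context: Faces are written $(a,b,c)$ in positive cyclic order for the orientation. For an edge $e=\{a,b\}$ with adjacent faces $(a,b,c)$ and $(b,a,d)$, $\theta_e=\pi-\mathrm{Arg}\frac{z_b-z_c}{z_a-z_c}-\mathrm{Arg}\frac{z_a-z_d}{z_b-z_d}$ (local continuous branch; for a Delaunay triangulation with counterclockwise faces this is $\pi$ minus the sum of the two angles opposite $e$). $A_{v,e}=\frac1{z_v-z_{v'}}$ if $e=\{v,v'\}$, and $0$ if $v\notin e$; $\bar A$ is its complex conjugate. $E_{e,e'}$: for $e\neq e'$ in a common face with edges $\{a,b\},\{b,c\},\{c,a\}$ in positive cyclic order, $E_{e,e'}=-1$ if $e'$ immediately follows $e$ and $+1$ if $e'$ immediately precedes $e$; otherwise $0$. Derivatives are Wirtinger derivatives. *)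

From HB Require Import structures.
From mathcomp Require Import all_boot all_order all_algebra.
From mathcomp Require Import all_classical all_reals all_analysis.
From mathcomp Require Import complex.
Set Implicit Arguments. Unset Strict Implicit. Unset Printing Implicit Defensive.
Import Order.TTheory GRing.Theory Num.Theory.
Local Open Scope ring_scope.

(* A triangulation on a finite vertex type V is given by its positively
   oriented faces: [face a b c] holds iff (a,b,c) is a face listed in positive
   cyclic order (so [face] is closed under cyclic rotation). *)

Definition adj (V : finType) (face : V -> V -> V -> bool) (a b : V) : bool :=
  [exists c, face a b c].

Definition third (V : finType) (face : V -> V -> V -> bool) (a b : V) : V :=
  odflt a [pick c | face a b c].

(* Triangulation of the oriented 2-sphere (combinatorial encoding):
   faces are non-degenerate simplices, rotation-invariant, a 2-simplex is
   determined by its vertex set (no face with both orientations), every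
   directed edge lies in exactly one positive face and each edge has the
   opposite orientation in its other face (closed oriented pseudo-surface),
   the link of every vertex is a single (non-empty) cycle (closed surface),
   the complex is connected and its Euler characteristic is 2 (sphere). *)
Definition sphere_triangulation (V : finType) (face : V -> V -> V -> bool) : Prop :=
  (forall a b c, face a b c -> [&& a != b, b != c & a != c]) /\
  (forall a b c, face a b c -> face b c a) /\
  (forall a b c, face a b c -> ~~ face b a c) /\
  (forall a b c c', face a b c -> face a b c' -> c = c') /\
  (forall a b, adj face a b -> adj face b a) /\
  (forall v : V, (exists u, adj face v u) /\
         forall u w, adj face v u -> adj face v w ->
           exists k : nat, iter k (third face v) u = w) /\
  (forall x y : V, connect (adj face) x y) /\
      (#|V| + #|[set t : V * V * V | face t.1.1 t.1.2 t.2]| %/ 3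
        = 2 + #|[set p : V * V | adj face p.1 p.2]| %/ 2)%N.

Definition is_edge (V : finType) (face : V -> V -> V -> bool) (e : {set V}) : bool :=
  [exists p : V * V, adj face p.1 p.2 && (e == [set p.1; p.2])].

(* E_{e,e'}: -1 if e' immediately follows e in a common face (a,b,c)
   with edges {a,b},{b,c},{c,a} in positive cyclic order, +1 if e'
   immediately precedes e, 0 otherwise. *)
Definition Emat (R : pzRingType) (V : finType) (face : V -> V -> V -> bool)
    (e e' : {set V}) : R :=
  if [exists t : V * V * V, [&& face t.1.1 t.1.2 t.2, e == [set t.1.1; t.1.2]
                                 & e' == [set t.1.2; t.2]]] then -1
  else if [exists t : V * V * V, [&& face t.1.1 t.1.2 t.2, e == [set t.1.1; t.1.2]
                                 & e' == [set t.2; t.1.1]]] then 1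
  else 0.
Arguments Emat {R V} face e e'.

Local Open Scope complex_scope.

(* principal argument in (-pi, pi] *)
Definition Arg (R : realType) (w : R[i]) : R :=
  if (complex.Im w < 0)%R then - acos ((complex.Re w : R) / (ComplexField.Normc.normc w : R))%R else acos ((complex.Re w : R) / (ComplexField.Normc.normc w : R))%R.

Definition no_degenerate_face (R : realType) (V : finType) (face : V -> V -> V -> bool)
    (z : V -> R[i]) : Prop :=
  forall a b c, face a b c -> complex.Im ((z b - z a) * (z c - z a)^*) != 0.

Definition theta_ab (R : realType) (V : finType) (face : V -> V -> V -> bool)
    (z : V -> R[i]) (a b : V) : R :=
  let c := third face a b in let d := third face b a in
  pi - Arg ((z b - z c) / (z a - z c)) - Arg ((z a - z d) / (z b - z d)).

(* theta_e for an edge e = {a,b} (the formula is symmetric in a, b) *)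
Definition theta_e (R : realType) (V : finType) (face : V -> V -> V -> bool)
    (z : V -> R[i]) (e : {set V}) : R :=
  match [pick p : V * V | adj face p.1 p.2 && (e == [set p.1; p.2])] with
  | Some p => theta_ab face z p.1 p.2
  | None => 0
  end.

Definition Amat (R : realType) (V : finType) (z : V -> R[i]) (v : V) (e : {set V})
    : R[i] :=
  if v \in e then
    match [pick w in e :\ v] with Some w => (z v - z w)^-1 | None => 0 end
  else 0.

Definition zpert (R : realType) (V : finType) (z : V -> R[i]) (v : V) (h : R[i])
    : V -> R[i] :=
  fun u => if u == v then z u + h else z u.

Definition wirt_dz (R : realType) (dx dy : R) : R[i] := (dx%:C - 'i * dy%:C) / 2%:R.
Definition wirt_dzbar (R : realType) (dx dy : R) : R[i] := (dx%:C + 'i * dy%:C) / 2%:R.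

(* Moving z_v to z_v + t k moves every numerator and denominator affinely in t,
   and the derivative at t = 0 of Arg ((N + t dN)/(M + t dM)) is Im (dN/N - dM/M).
   The four quotients that occur are k A_{v,e'} for the four edges e' <> e of
   the two faces, each with the sign E_{e',e}; hence the derivative of theta_e
   in the direction k is - Im (k S) with S = sum_e' A_{v,e'} E_{e',e}.  The
   Wirtinger combinations of the directions k = 1 and k = i give (i/2) S and,
   E being real, - (i/2) conj S. *)

From HB Require Import structures.
From mathcomp Require Import all_boot all_order all_algebra.
From mathcomp Require Import all_classical all_reals all_analysis.
From mathcomp Require Import complex.
From mathcomp Require Import ring.
Import Order.TTheory GRing.Theory Num.Theory.
Import numFieldNormedType.Exports.
Local Open Scope ring_scope.
Local Open Scope complex_scope.

Section ArgDerivative.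
Context {R : realType}.
Implicit Types (f g : R -> R) (s : R).

Lemma is_derive_continuous {f s df} : is_derive s 1 f df -> {for s, continuous f}.
Proof. by case=> /derivable1_diffP/differentiable_continuous. Qed.

Lemma is_derive_acos_div_norm {f g s df dg} :
  is_derive s 1 f df -> is_derive s 1 g dg -> g s != 0 ->
  is_derive s 1 (fun t => acos (f t / Num.sqrt (f t ^+ 2 + g t ^+ 2)))
    (Num.sg (g s) * ((f s * dg - df * g s) / (f s ^+ 2 + g s ^+ 2))).
Proof.
move=> Df Dg g0.
set x := f s; set y := g s; set r2 := x ^+ 2 + y ^+ 2.
have r2_gt0 : 0 < r2 by rewrite ltr_wpDl ?sqr_ge0 // exprn_even_gt0.
set r := Num.sqrt r2; have r_gt0 : 0 < r by rewrite sqrtr_gt0.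
have rr : r ^+ 2 = x ^+ 2 + y ^+ 2 by rewrite sqr_sqrtr // ltW.
have Dr : is_derive s 1 (Num.sqrt \o (fun t => f t ^+ 2 + g t ^+ 2))
    ((2 * r)^-1 * (2 * x * df + 2 * y * dg)).
  have Dq : is_derive s 1 (fun t => f t ^+ 2 + g t ^+ 2) _ :=
    is_deriveD (is_deriveX 2 Df) (is_deriveX 2 Dg).
  apply: is_derive_eq (is_derive1_comp (g := fun t => f t ^+ 2 + g t ^+ 2)
                         (is_derive1_sqrt r2_gt0) Dq) _.
  by rewrite /GRing.scale /= -/x -/y !expr1; ring.
have Du := is_deriveM Df
  (is_deriveV (f := Num.sqrt \o (fun t => f t ^+ 2 + g t ^+ 2)) (lt0r_neq0 r_gt0) Dr).
have u_in : -1 < x / r < 1.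
  have : `|x| < r by rewrite -sqrtr_sqr ltr_sqrt // ltrDl exprn_even_gt0.
  by rewrite ltr_norml ltr_pdivrMr // ltr_pdivlMr // mul1r mulN1r.
apply: is_derive_eq
  (is_derive1_comp (g := fun t => f t / Num.sqrt (f t ^+ 2 + g t ^+ 2))
     (is_derive1_acos u_in) Du) _.
have -> : Num.sqrt (1 - (x / r) ^+ 2) = `|y| / r.
  have -> : 1 - (x / r) ^+ 2 = (y / r) ^+ 2.
    by rewrite !expr_div_n rr /r2; field; rewrite -/r2 gt_eqF.
  by rewrite sqrtr_sqr normf_div (gtr0_norm r_gt0).
rewrite /= -/x -/y -/r2 -/r /GRing.scale /= /r2 -rr; clearbody r; clear r2_gt0 Du Dr.
have r_ne0 : r != 0 by rewrite gt_eqF.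
case: (ltrgt0P y) => [y_gt0|y_lt0|y0]; last by rewrite -y0 eqxx in g0.
- by rewrite gtr0_sg //; field: rr; rewrite r_ne0 gt_eqF.
- by rewrite ltr0_sg //; field: rr; rewrite r_ne0 lt_eqF.
Qed.

Lemma near_sg_eq f s : {for s, continuous f} -> f s != 0 ->
  \forall t \near s, Num.sg (f t) = Num.sg (f s).
Proof.
move=> cf; case: ltrgt0P => // [f_gt0|f_lt0] _.
- near=> t; rewrite !gtr0_sg //; near: t; exact: (@cvgr_gt R _ _ _ _ _ cf).
- near=> t; rewrite !ltr0_sg //; near: t; exact: (@cvgr_lt R _ _ _ _ _ cf).
Unshelve. all: by end_near.
Qed.

Definition is_cderive s (w : R -> R[i]) (dw : R[i]) : Prop :=
  is_derive s 1 (fun t => complex.Re (w t)) (complex.Re dw) /\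
  is_derive s 1 (fun t => complex.Im (w t)) (complex.Im dw).

Lemma ArgE (w : R[i]) : complex.Im w != 0 -> Arg w =
  Num.sg (complex.Im w) * acos (complex.Re w / Num.sqrt (complex.Re w ^+ 2 + complex.Im w ^+ 2)).
Proof.
case: w => x y /= y0; rewrite /Arg /=.
case: (ltrgt0P y) y0 => [y_gt0|y_lt0|y0]; last by move=> /eqP.
- by rewrite gtr0_sg // mul1r.
- by rewrite ltr0_sg // mulN1r.
Qed.

Lemma Im_div (u w : R[i]) : complex.Im (u / w) =
  (complex.Re w * complex.Im u - complex.Re u * complex.Im w) /
  (complex.Re w ^+ 2 + complex.Im w ^+ 2).
Proof. by case: u w => a b [c d] /=; ring. Qed.

Lemma is_derive_Arg {s w dw} : is_cderive s w dw -> complex.Im (w s) != 0 ->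
  is_derive s 1 (fun t => Arg (w t)) (complex.Im (dw / w s)).
Proof.
move=> [Dre Dim] w0.
have Dacos :=
  is_deriveZ (Num.sg (complex.Im (w s))) (is_derive_acos_div_norm Dre Dim w0).
apply: near_eq_is_derive (is_derive_eq Dacos _).
  near=> t.
  have sgE : Num.sg (complex.Im (w t)) = Num.sg (complex.Im (w s)).
    by near: t; exact: near_sg_eq (is_derive_continuous Dim) w0.
  have wt0 : complex.Im (w t) != 0 by rewrite -sgr_eq0 sgE sgr_eq0.
  by rewrite /= ArgE // sgE.
by rewrite Im_div scalerA -expr2 sqr_sg w0 scale1r.
Unshelve. all: by end_near.
Qed.

Lemma is_cderive_lin s (c k : R[i]) : is_cderive s (fun t => c + t%:C * k) k.
Proof.
have Dlin a b : is_derive s 1 (fun t : R => a + t * b) b.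
  have Dab : is_derive s 1 (fun t : R => a + t * b) _ :=
    is_deriveD (is_derive_cst a s 1) (is_deriveM (is_derive_id s 1) (is_derive_cst b s 1)).
  by apply: is_derive_eq Dab _; rewrite /GRing.scale /=; ring.
case: c k => a1 a2 [b1 b2]; split.
- have -> : (fun t => complex.Re (a1 +i* a2 + t%:C * (b1 +i* b2))) = (fun t => a1 + t * b1).
    by apply: funext => t /=; ring.
  exact: Dlin.
- have -> : (fun t => complex.Im (a1 +i* a2 + t%:C * (b1 +i* b2))) = (fun t => a2 + t * b2).
    by apply: funext => t /=; ring.
  exact: Dlin.
Qed.

Lemma is_cderive_conj {s w dw} : is_cderive s w dw -> is_cderive s (fun t => (w t)^* ) dw^*.
Proof.
case=> Dre Dim; split.
- have -> : (fun t => complex.Re (w t)^* ) = (fun t => complex.Re (w t)).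
    by apply: funext => t; case: (w t).
  by case: dw Dre {Dim}.
- have -> : (fun t => complex.Im (w t)^* ) = (fun t => - complex.Im (w t)).
    by apply: funext => t; case: (w t).
  by case: dw Dim {Dre} => a b; apply: is_deriveN.
Qed.

Lemma is_cderive_mul {s u du w dw} : is_cderive s u du -> is_cderive s w dw ->
  is_cderive s (fun t => u t * w t) (u s * dw + du * w s).
Proof.
case=> Ure Uim [Wre Wim]; split.
- have -> : (fun t => complex.Re (u t * w t)) = (fun t =>
      complex.Re (u t) * complex.Re (w t) - complex.Im (u t) * complex.Im (w t)).
    by apply: funext => t; case: (u t) => ? ?; case: (w t).
  have D : is_derive s 1 (fun t =>
      complex.Re (u t) * complex.Re (w t) - complex.Im (u t) * complex.Im (w t)) _ :=
    is_deriveB (is_deriveM Ure Wre) (is_deriveM Uim Wim).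
  apply: is_derive_eq D _; rewrite /GRing.scale /=.
  by clear Ure Uim Wre Wim; move: (u s) (w s) du dw => [? ?] [? ?] [? ?] [? ?] /=; ring.
- have -> : (fun t => complex.Im (u t * w t)) = (fun t =>
      complex.Re (u t) * complex.Im (w t) + complex.Im (u t) * complex.Re (w t)).
    by apply: funext => t; case: (u t) => ? ?; case: (w t).
  have D : is_derive s 1 (fun t =>
      complex.Re (u t) * complex.Im (w t) + complex.Im (u t) * complex.Re (w t)) _ :=
    is_deriveD (is_deriveM Ure Wim) (is_deriveM Uim Wre).
  apply: is_derive_eq D _; rewrite /GRing.scale /=.
  by clear Ure Uim Wre Wim; move: (u s) (w s) du dw => [? ?] [? ?] [? ?] [? ?] /=; ring.
Qed.

Lemma Arg_scale (w : R[i]) (r : R) : 0 < r -> Arg (w * r%:C) = Arg w.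
Proof.
case: w => a b r_gt0; rewrite /Arg /= !mulr0 !subr0 !add0r (pmulr_llt0 _ r_gt0).
have -> : (a * r) ^+ 2 + (b * r) ^+ 2 = (a ^+ 2 + b ^+ 2) * r ^+ 2 by ring.
rewrite sqrtrM ?addr_ge0 ?sqr_ge0 // sqrtr_sqr (gtr0_norm r_gt0).
by rewrite invfM mulrACA divff ?gt_eqF // mulr1.
Qed.

Lemma Arg_div (u w : R[i]) : Arg (u / w) = Arg (u * w^* ).
Proof.
have -> : u / w = u * w^* * ((complex.Re w ^+ 2 + complex.Im w ^+ 2)^-1)%:C.
  case: u w => a b [c d]; apply/eqP; rewrite eq_complex /=.
  by apply/andP; split; apply/eqP; ring.
have [->|w_ne0] := eqVneq w 0; first by rewrite rmorph0 mulr0 mul0r.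
apply: Arg_scale; rewrite invr_gt0 lt_neqAle addr_ge0 ?sqr_ge0 // andbT.
rewrite eq_sym paddr_eq0 ?sqr_ge0 // !sqrf_eq0.
by apply: contra w_ne0; case: w => a b /= /andP[/eqP-> /eqP->].
Qed.

Lemma Im_conj (w : R[i]) : complex.Im w^* = - complex.Im w.
Proof. by case: w. Qed.

Lemma is_derive_Arg_div_lin (N M dN dM : R[i]) : complex.Im (N * M^* ) != 0 ->
  is_derive (0 : R) 1 (fun t => Arg ((N + t%:C * dN) / (M + t%:C * dM)))
    (complex.Im (dN / N - dM / M)).
Proof.
move=> NM_ne0.
have N_ne0 : N != 0 by apply: contraNneq NM_ne0 => ->; rewrite mul0r.
have M_ne0 : M^* != 0.
  by rewrite fmorph_eq0; apply: contraNneq NM_ne0 => ->; rewrite rmorph0 mulr0.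
under eq_fun do rewrite Arg_div.
have Dw := is_cderive_mul (is_cderive_lin 0 N dN) (is_cderive_conj (is_cderive_lin 0 M dM)).
rewrite /= rmorph0 !mul0r !addr0 in Dw.
apply: is_derive_eq (is_derive_Arg Dw _) _; rewrite /= rmorph0 !mul0r !addr0 //.
have -> : (N * dM^* + dN * M^* ) / (N * M^* ) = dN / N + dM^* / M^*.
  by field; rewrite N_ne0 M_ne0.
by rewrite -fmorph_div !raddfD raddfN /= Im_conj addrC.
Qed.

Lemma is_derive_sub_Arg_div_lin {F dF} {N M dN dM : R[i]} :
  complex.Im (N * M^* ) != 0 -> is_derive (0 : R) 1 F dF ->
  is_derive (0 : R) 1 (fun t => F t - Arg ((N + t%:C * dN) / (M + t%:C * dM)))
    (dF - complex.Im (dN / N - dM / M)).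
Proof.
by move=> NM_ne0 DF; have := is_deriveB DF (is_derive_Arg_div_lin _ _ dN dM NM_ne0).
Qed.
End ArgDerivative.

Lemma eq_set2 (V : finType) (x y u w : V) :
  ([set x; y] == [set u; w]) = (x == u) && (y == w) || (x == w) && (y == u).
Proof.
apply/eqP/idP => [/setP E | /orP[] /andP[/eqP-> /eqP->] //]; last exact: finset.setUC.
move: (E x) (E y) (E u) (E w); rewrite !inE !eqxx ?orbT /=.
move=> /esym/orP[]/eqP-> /esym/orP[]/eqP->; rewrite ?eqxx ?orbT ?orbb ?andbT //=.
  by rewrite eq_sym => _ ->.
by rewrite eq_sym => ->.
Qed.

Lemma sum_mul_mem (R : pzSemiRingType) (I : finType) (P : pred I) (F : I -> R)
    (s : seq I) : uniq s -> all P s -> \sum_(i | P i) F i * (i \in s)%:R = \sum_(i <- s) F i.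
Proof.
move=> s_uniq sP; rewrite [RHS]big_uniq //.
rewrite (eq_bigr (fun i => if i \in s then F i else 0)) => [|i _]; last first.
  by rewrite mulr_natr mulrb.
rewrite -big_mkcondr; apply: eq_bigl => i.
by case: (boolP (i \in s)) => [/(allP sP) ->|]; rewrite ?andbF.
Qed.

Section EdgeColumn.
Context {V : finType} {face : V -> V -> V -> bool}.
Hypotheses (face_rot : forall {a b c}, face a b c -> face b c a)
           (face_third : forall {a b c c'}, face a b c -> face a b c' -> c = c').

Lemma is_edge_face {a b c} : face a b c -> is_edge face [set a; b].
Proof.
by move=> F; apply/existsP; exists (a, b); rewrite eqxx andbT; apply/existsP; exists c.
Qed.

Context {a b c d : V}.
Hypotheses (Fabc : face a b c) (Fbad : face b a d).
Hypotheses (ab : a != b) (ac : a != c) (ad : a != d) (bc : b != c) (bd : b != d)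
  (cd : c != d).

Let distinct := (eq_sym b a, eq_sym c b, eq_sym d c, eq_sym c a, eq_sym d a, eq_sym d b,
  negbTE ab, negbTE ac, negbTE ad, negbTE bc, negbTE bd, negbTE cd).

Lemma precedes_ab e : [exists t : V * V * V, [&& face t.1.1 t.1.2 t.2,
    e == [set t.1.1; t.1.2] & [set a; b] == [set t.1.2; t.2]]] =
  (e \in [:: [set c; a]; [set d; b]]).
Proof.
apply/existsP/idP => [[[[t1 t2] t3]] /and3P[F /eqP-> /=]|].
  rewrite eq_set2 !inE => /orP[]/andP[/eqP t2a /eqP t3b]; subst t2 t3.
  - by rewrite (face_third Fabc (face_rot F)) eqxx.
  - by rewrite (face_third Fbad (face_rot F)) eqxx orbT.
rewrite !inE => /orP[]/eqP->.
- by exists (c, a, b); rewrite /= !eqxx (face_rot (face_rot Fabc)).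
- by exists (d, b, a); rewrite /= eqxx eq_set2 !eqxx (face_rot (face_rot Fbad)) orbT.
Qed.

Lemma follows_ab e : [exists t : V * V * V, [&& face t.1.1 t.1.2 t.2,
    e == [set t.1.1; t.1.2] & [set a; b] == [set t.2; t.1.1]]] =
  (e \in [:: [set b; c]; [set a; d]]).
Proof.
apply/existsP/idP => [[[[t1 t2] t3]] /and3P[F /eqP-> /=]|].
  rewrite eq_set2 !inE => /orP[]/andP[/eqP t3a /eqP t1b]; subst t3 t1.
  - by rewrite (face_third Fabc (face_rot (face_rot F))) eqxx.
  - by rewrite (face_third Fbad (face_rot (face_rot F))) eqxx orbT.
rewrite !inE => /orP[]/eqP->.
- by exists (b, c, a); rewrite /= !eqxx (face_rot Fabc).
- by exists (a, d, b); rewrite /= eqxx eq_set2 !eqxx (face_rot Fbad) orbT.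
Qed.

Lemma Emat_column (R : pzRingType) e : Emat (R := R) face e [set a; b] =
  (e \in [:: [set b; c]; [set a; d]])%:R - (e \in [:: [set c; a]; [set d; b]])%:R.
Proof.
rewrite /Emat precedes_ab follows_ab.
case: ifP => [|_]; last by case: ifP; rewrite ?subr0.
by rewrite !inE => /orP[]/eqP->; rewrite !eq_set2 !distinct /= ?eqxx ?andbF sub0r.
Qed.

Lemma sum_Emat_column (R : pzRingType) (A : {set V} -> R) :
  \sum_(e | is_edge face e) A e * Emat face e [set a; b] =
  A [set b; c] + A [set a; d] - (A [set c; a] + A [set d; b]).
Proof.
under eq_bigr do rewrite Emat_column mulrBr.
rewrite sumrB !sum_mul_mem ?big_cons ?big_nil ?addr0 //= ?inE ?eq_set2 ?distinct ?andbF //.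
- rewrite (is_edge_face (face_rot (face_rot Fabc))).
  by rewrite (is_edge_face (face_rot (face_rot Fbad))).
- by rewrite (is_edge_face (face_rot Fabc)) (is_edge_face (face_rot Fbad)).
Qed.
End EdgeColumn.

Section Perturbation.
Variables (R : realType) (V : finType) (z : V -> R[i]) (v : V).

Lemma zpertB h x y :
  zpert z v h x - zpert z v h y = z x - z y + ((x == v)%:R - (y == v)%:R) * h.
Proof. by rewrite /zpert; case: (x == v); case: (y == v) => /=; ring. Qed.

Lemma Amat_set2 x y : x != y ->
  Amat z v [set x; y] = ((x == v)%:R - (y == v)%:R) / (z x - z y).
Proof.
have pick2 (u w : V) : u != w -> [pick t in [set u; w] :\ u] = Some w.
  move=> uw; rewrite finset.setU1K; last by rewrite inE.
  by case: pickP => [t /set1P -> // | /(_ w)]; rewrite inE eqxx.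
move=> xy; rewrite /Amat !inE ![v == _]eq_sym.
case: (eqVneq x v) => [<-|xv].
  by rewrite pick2 // eq_sym (negbTE xy) subr0 mul1r.
case: (eqVneq y v) => [<-|yv].
  by rewrite finset.setUC pick2 1?eq_sym // sub0r mulN1r -invrN opprB.
by rewrite subrr mul0r.
Qed.
End Perturbation.

Lemma adj_face_third {V : finType} {face : V -> V -> V -> bool} {a b} :
  adj face a b -> face a b (third face a b).
Proof.
by case/existsP => c Fabc; rewrite /third; case: pickP => [//|/(_ c)]; rewrite Fabc.
Qed.

Lemma theta_e_set2 (R : realType) (V : finType) (face : V -> V -> V -> bool) e :
  is_edge face e -> exists a b, [/\ adj face a b, e = [set a; b] &
    forall z : V -> R[i], theta_e face z e = theta_ab face z a b].
Proof.
rewrite /theta_e; case: pickP => [[a b] /andP[ab /eqP ->] _ | none]; first by exists a, b.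
by case/existsP => p; rewrite none.
Qed.

Lemma Im_mul_conj (R : realType) (u w : R[i]) :
  complex.Im (u * w^* ) = - complex.Im (w * u^* ).
Proof. by case: u w => a b [c d] /=; ring. Qed.

Section ThetaDerivative.
Context {R : realType} {V : finType} {face : V -> V -> V -> bool} {z : V -> R[i]}.
Hypotheses (face_nd : forall {a b c}, face a b c -> [&& a != b, b != c & a != c])
  (face_rot : forall {a b c}, face a b c -> face b c a)
  (face_asym : forall {a b c}, face a b c -> ~~ face b a c)
  (face_third : forall {a b c c'}, face a b c -> face a b c' -> c = c')
  (adj_sym : forall {a b}, adj face a b -> adj face b a)
  (nondeg : no_degenerate_face face z).
Variables (a b : V) (ab_adj : adj face a b).

Let c := third face a b.
Let d := third face b a.
Let Fabc : face a b c := adj_face_third ab_adj.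
Let Fbad : face b a d := adj_face_third (adj_sym ab_adj).

Lemma is_derive_theta_ab v k :
  is_derive (0 : R) 1 (fun t => theta_ab face (zpert z v (t%:C * k)) a b)
    (- complex.Im (k * \sum_(e | is_edge face e) Amat z v e * Emat face e [set a; b])).
Proof.
have /and3P[ab bc ac] := face_nd Fabc.
have /and3P[_ ad bd] := face_nd Fbad.
have cd : c != d by apply/eqP => cd; move: (face_asym Fabc); rewrite cd Fbad.
rewrite (sum_Emat_column (@face_rot) (@face_third) Fabc Fbad ab ac ad bc bd cd).
rewrite [[set c; a]]finset.setUC [[set d; b]]finset.setUC !Amat_set2 //.
have nd1 : complex.Im ((z b - z c) * (z a - z c)^* ) != 0.
  by rewrite Im_mul_conj oppr_eq0; exact: nondeg (face_rot (face_rot Fabc)).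
have nd2 : complex.Im ((z a - z d) * (z b - z d)^* ) != 0.
  by rewrite Im_mul_conj oppr_eq0; exact: nondeg (face_rot (face_rot Fbad)).
rewrite /theta_ab -/c -/d.
under eq_fun => t do rewrite !zpertB ![_ * (t%:C * k)]mulrCA.
apply: is_derive_eq.
  apply: (is_derive_sub_Arg_div_lin nd2).
  by apply: (is_derive_sub_Arg_div_lin nd1); exact: is_derive_cst.
rewrite sub0r -!raddfN -raddfD /=; congr complex.Im; ring.
Qed.
End ThetaDerivative.

Section Wirtinger.
Context {R : realType}.

Lemma wirt_dz_directional (S : R[i]) :
  wirt_dz (- complex.Im S) (- complex.Im ('i * S)) = 'i / 2%:R * S.
Proof.
rewrite /wirt_dz mulrAC; congr (_ / _).
by case: S => a b; apply/eqP; rewrite eq_complex /=; apply/andP; split; apply/eqP; ring.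
Qed.

Lemma wirt_dzbar_directional (S : R[i]) :
  wirt_dzbar (- complex.Im S) (- complex.Im ('i * S)) = - ('i / 2%:R) * S^*.
Proof.
rewrite /wirt_dzbar mulNr mulrAC -mulNr; congr (_ / _).
by case: S => a b; apply/eqP; rewrite eq_complex /=; apply/andP; split; apply/eqP; ring.
Qed.
End Wirtinger.

Lemma conjc_Emat (R : realType) (V : finType) (face : V -> V -> V -> bool) e e' :
  (Emat face e e' : R[i])^* = Emat face e e'.
Proof.
by rewrite /Emat; case: ifP => _; [|case: ifP => _]; rewrite ?rmorphN1 ?rmorph1 ?rmorph0.
Qed.

Theorem proposition3 (R : realType) (V : finType) (face : V -> V -> V -> bool)
    (z : V -> R[i]) :
  sphere_triangulation face -> injective z -> no_degenerate_face face z ->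
  forall (v : V) (e : {set V}), is_edge face e ->
  exists dx dy : R,
    [/\ is_derive (0 : R) (1 : R) (fun t : R => theta_e face (zpert z v t%:C) e) dx,
        is_derive (0 : R) (1 : R) (fun t : R => theta_e face (zpert z v (t *i)) e) dy,
        wirt_dz dx dy = 'i / 2%:R * \sum_(e' : {set V} | is_edge face e')
                                      Amat z v e' * Emat face e' e
      & wirt_dzbar dx dy = - ('i / 2%:R) * \sum_(e' : {set V} | is_edge face e')
                                      (Amat z v e')^* * Emat face e' e ].
Proof.
move=> [face_nd [face_rot [face_asym [face_third [adj_sym _]]]]] _ nondeg v e.
case/(theta_e_set2 R) => a [b [ab_adj -> thetaE]].
set S := \sum_(e' | is_edge face e') _.
have Dtheta k : is_derive (0 : R) 1
    (fun t => theta_e face (zpert z v (t%:C * k)) [set a; b]) (- complex.Im (k * S)).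
  under eq_fun do rewrite thetaE.
  exact: is_derive_theta_ab face_nd face_rot face_asym face_third adj_sym nondeg
    a b ab_adj v k.
exists (- complex.Im S), (- complex.Im ('i * S)); split.
- by move: (Dtheta 1); rewrite mul1r; under eq_fun do rewrite mulr1.
- move: (Dtheta 'i); congr is_derive; apply: funext => t; congr (theta_e _ (zpert _ _ _) _).
  by apply/eqP; rewrite eq_complex /=; apply/andP; split; apply/eqP; ring.
- exact: wirt_dz_directional.
- rewrite wirt_dzbar_directional rmorph_sum; congr (_ * _); apply: eq_bigr => e' _.
  by rewrite rmorphM; congr (_ * _); exact: conjc_Emat.
Qed.
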